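(* Let $p$ be a prime, $d$ a positive integer, and $\alpha>1-\frac{1}{d}\left(1-\frac{1}{p}\right)$. Let $S\subseteq\{1,2,\dots,p\}$ with $|S|\ge\alpha p$, and let $A=S+p\mathbb{Z}=\{s+pn : s\in S,\ n\in\mathbb{Z}\}$. Then \[h(A^d)\le |S|^d.\]
   Context: For a set $X\subseteq\mathbb{R}^d$, the Helly number $h(X)$ is the smallest $h$ such that the following holds: for every finite family $\mathcal{F}$ of convex sets in $\mathbb{R}^d$, if every $h$ or fewer sets of $\mathcal{F}$ have a point of $X$ in their intersection, then the intersection of all sets of $\mathcal{F}$ contains a point of $X$. If no such $h$ exists, $h(X)=\infty$. $A^d$ denotes the $d$-fold Cartesian product of $A$. *)

From HB Require Import structures.
From mathcomp Require Import all_boot all_order all_algebra.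
From mathcomp Require Import reals.
Set Implicit Arguments. Unset Strict Implicit. Unset Printing Implicit Defensive.
Import Order.TTheory GRing.Theory Num.Theory.
Local Open Scope ring_scope.

Definition convex_set (R : realType) (d : nat) (C : 'rV[R]_d -> Prop) : Prop :=
  forall x y : 'rV[R]_d, C x -> C y ->
    forall t : R, 0 <= t -> t <= 1 -> C ((1 - t) *: x + t *: y).

Definition helly_prop (R : realType) (d : nat) (X : 'rV[R]_d -> Prop) (h : nat)
  : Prop :=
  forall (I : finType) (C : I -> 'rV[R]_d -> Prop),
    (forall i, convex_set (C i)) ->
    (forall J : {set I}, (#|J| <= h)%N ->
        exists x, X x /\ forall i, i \in J -> C i x) ->
    exists x, X x /\ forall i, C i x.

(* h(X) <= n : the Helly number (smallest h with the Helly property) is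
   finite and at most n. *)
Definition helly_number_le (R : realType) (d : nat) (X : 'rV[R]_d -> Prop)
  (n : nat) : Prop :=
  exists h : nat, (h <= n)%N /\ helly_prop X h.

Definition periodic_set (R : realType) (p : nat) (S : nat -> Prop) (x : R)
  : Prop :=
  exists (s : nat) (n : int), S s /\ x = (s%:Z + p%:Z * n)%:~R.

Definition cart_pow (R : realType) (d : nat) (A : R -> Prop) (x : 'rV[R]_d)
  : Prop :=
  forall i : 'I_d, A (x ord0 i).

From mathcomp Require Import all_boot all_order all_algebra.
From mathcomp Require Import reals boolp.
From mathcomp Require Import ring lra zify.
Set Implicit Arguments. Unset Strict Implicit. Unset Printing Implicit Defensive.
Import Order.TTheory GRing.Theory Num.Theory.
Local Open Scope ring_scope.

(* A Hoffman-type argument bounds the Helly number of a set X with finitely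
   many points in every bounded region by k as soon as, among any k + 1 points
   of X, two have a point of X strictly between them.  Given points y_i of X
   (i in J, |J| > k), induction on the number of points of X in their convex
   hull yields a point of X in the hull of every subfamily J \ i; in a Helly
   configuration, where y_i lies in every C_j with j <> i, that point lies in
   every C_i.

   For X = A^d with A = S + pZ, among |S|^d + 1 points two, y and y', have the
   same residues mod p, so y' = y + p v with v integral.  The point
   y + (j/p)(y' - y) = y + j v is integral with residues s + j v.  In each
   coordinate at most p - |S| multipliers j send s + j v outside S mod p,
   since j |-> s + j v is a bijection of F_p when v is nonzero mod p.  The
   hypothesis on alpha gives d (p - |S|) < p - 1, so some j in 1..p-1 works
   in all d coordinates at once. *)

Section ConvexHull.
Variables (R : realType) (d : nat) (I : finType).
Local Notation vec := 'rV[R]_d.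
Implicit Types (P Q : {set I}) (y : I -> vec).

Definition hull P y (z : vec) : Prop :=
  forall C, convex_set C -> (forall j, j \in P -> C (y j)) -> C z.

Definition hull_core P y (z : vec) : Prop :=
  forall i, i \in P -> hull (P :\ i) y z.

Lemma hull_convex P y : convex_set (hull P y).
Proof.
move=> x1 x2 h1 h2 t t0 t1 C convC yC.
by apply: (convC x1 x2) => //; [apply: h1 | apply: h2].
Qed.

Lemma hull_vertex P y j : j \in P -> hull P y (y j).
Proof. by move=> jP C _; apply. Qed.

Lemma hull_trans P Q y y' z :
  (forall j, j \in Q -> hull P y (y' j)) -> hull Q y' z -> hull P y z.
Proof. by move=> hy' hz; apply: hz (@hull_convex P y) hy'. Qed.

Lemma subset_hull P Q y z : P \subset Q -> hull P y z -> hull Q y z.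
Proof. by move=> /subsetP sPQ; apply: hull_trans => j /sPQ; apply: hull_vertex. Qed.

Lemma hull_segment P y a b t : a \in P -> b \in P -> 0 <= t <= 1 ->
  hull P y ((1 - t) *: y a + t *: y b).
Proof.
move=> aP bP /andP[t0 t1].
exact: (@hull_convex P y _ _ (hull_vertex aP) (hull_vertex bP) t t0 t1).
Qed.

Lemma hull_update Q y b z w :
  (b \in Q -> hull Q y z) -> hull Q [eta y with b |-> z] w -> hull Q y w.
Proof.
move=> hz; apply: hull_trans => j jQ /=.
by case: eqP => [jb | _]; [apply: hz; rewrite -jb | apply: hull_vertex].
Qed.

Definition cone (x : vec) (C : vec -> Prop) (w : vec) : Prop :=
  exists2 s : R, 0 < s & exists2 k, C k & w = x + s *: (k - x).

Lemma convex_cone x C : convex_set C -> convex_set (cone x C).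
Proof.
move=> convC _ _ [s1 s1_gt0 [k1 Ck1 ->]] [s2 s2_gt0 [k2 Ck2 ->]] r r0 r1.
pose s := (1 - r) * s1 + r * s2.
have s_gt0 : 0 < s by rewrite /s; nra.
exists s => //; exists ((1 - r * s2 / s) *: k1 + (r * s2 / s) *: k2).
  apply: (convC k1 k2) => //.
    by rewrite divr_ge0 ?mulr_ge0 // ltW.
  by rewrite ler_pdivrMr // mul1r /s lerDr mulr_ge0 ?subr_ge0 // ltW.
apply/rowP => i; rewrite !mxE /s; field.
by rewrite lt0r_neq0.
Qed.

(* The cone from [y a] over the hull of the other points is convex and
   contains the updated family, and [y a] belongs to it only as a point of
   that hull. *)
Lemma hull_update_strict P y a b t : b \in P :\ a -> 0 < t ->
  hull P [eta y with a |-> (1 - t) *: y a + t *: y b] (y a) -> hull (P :\ a) y (y a).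
Proof.
move=> bPa t_gt0 hya.
have [|s s_gt0 [k hk ya_eq]] := hya _ (@convex_cone (y a) _ (@hull_convex (P :\ a) y)).
  move=> j jP /=; case: eqP => [_ | /eqP ja].
    exists t => //; exists (y b); first exact: hull_vertex.
    by apply/rowP => i; rewrite !mxE; ring.
  exists 1 => //; exists (y j); last by rewrite scale1r addrC subrK.
  by apply: hull_vertex; rewrite in_setD1 ja.
have /eqP : s *: (k - y a) = 0 by apply: (@addrI _ (y a)); rewrite addr0 -ya_eq.
by rewrite scaler_eq0 (gt_eqF s_gt0) subr_eq0 => /eqP <-.
Qed.

Lemma hull_core_vertex P y a : a \in P -> hull (P :\ a) y (y a) -> hull_core P y (y a).
Proof.
move=> aP ha i iP; have [-> // | ia] := eqVneq i a.
by apply: hull_vertex; rewrite in_setD1 eq_sym ia.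
Qed.

Section Merge.
Variables (P : {set I}) (y : I -> vec) (a b : I) (z u u' : vec).
Hypotheses (aP : a \in P) (bP : b \in P) (z_ab : hull [set a; b] y z).
Hypothesis core_a : hull_core P [eta y with a |-> z] u.
Hypothesis core_b : hull_core P [eta y with b |-> z] u'.

Lemma hull_merge_sub w :
  hull P [eta y with a |-> u', b |-> u] w -> hull P [eta y with a |-> z] w.
Proof.
have ya_z : hull P [eta y with a |-> z] z.
  by have := hull_vertex (y := [eta y with a |-> z]) aP; rewrite /= eqxx.
have ya_y k : k \in P -> k != a -> hull P [eta y with a |-> z] (y k).
  by move=> kP /negbTE ka; have := hull_vertex (y := [eta y with a |-> z]) kP; rewrite /= ka.
apply: hull_trans => j jP /=; case: eqP => [_ | /eqP ja]; last case: eqP => [_ | _].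
- apply: hull_trans (core_b aP) => k /setD1P[ka kP] /=.
  by case: eqP => [_ | _]; [apply: ya_z | apply: ya_y].
- exact: subset_hull (subsetDl P [set b]) (core_a bP).
- exact: ya_y.
Qed.

Lemma hull_core_merge v :
  hull_core P [eta y with a |-> u', b |-> u] v -> hull_core P y v.
Proof.
move=> core_v i iP.
have z_i : i != a -> i != b -> hull (P :\ i) y z.
  move=> ia ib; apply: subset_hull z_ab.
  by rewrite subUset !sub1set !in_setD1 aP bP eq_sym ia eq_sym ib.
apply: hull_trans (core_v i iP) => j; rewrite in_setD1 => /andP[ji jP] /=.
case: eqP => [ja | _]; last case: eqP => [jb | _].
- apply: hull_update (core_b iP) => /[!in_setD1] /andP[bi _].
  by apply: z_i; rewrite 1?eq_sym -?ja.
- apply: hull_update (core_a iP) => /[!in_setD1] /andP[ai _].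
  by apply: z_i; rewrite 1?eq_sym -?jb.
- by apply: hull_vertex; rewrite in_setD1 ji.
Qed.

End Merge.

End ConvexHull.

Definition segment_property (R : realType) (d : nat) (X : 'rV[R]_d -> Prop) (k : nat) :=
  forall (I : finType) (J : {set I}) (y : I -> 'rV[R]_d), (k < #|J|)%N ->
    (forall i, i \in J -> X (y i)) ->
    exists a b (t : R), [/\ a \in J, b \in J, a != b, 0 < t < 1 &
                            X ((1 - t) *: y a + t *: y b)].

Definition locally_finite (R : realType) (d : nat) (X : 'rV[R]_d -> Prop) :=
  forall M : R, exists L : seq 'rV[R]_d,
    forall w, X w -> (forall c, `|w ord0 c| <= M) -> w \in L.

Lemma locally_finite_hull (R : realType) (d : nat) (I : finType) (X : 'rV[R]_d -> Prop)
    (P : {set I}) (y : I -> 'rV[R]_d) :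
  locally_finite X -> exists L : seq 'rV[R]_d, forall w, X w -> hull P y w -> w \in L.
Proof.
move=> finX; pose M := \sum_(j in P) \sum_c `|y j ord0 c|.
have [L XL] := finX M.
exists L => w Xw hw; apply: XL Xw _ => c.
apply: (hw (fun w => `|w ord0 c| <= M)).
  move=> x1 x2 x1M x2M t t0 t1; rewrite !mxE.
  have t1' : 0 <= 1 - t by rewrite subr_ge0.
  apply: le_trans (ler_normD _ _) _.
  rewrite !normrM (ger0_norm t0) (ger0_norm t1'); nra.
move=> j jP; rewrite /M (bigD1 j jP) (bigD1 c) //= -addrA lerDl.
by rewrite addr_ge0 ?sumr_ge0 // => i _; rewrite sumr_ge0.
Qed.

Section Hoffman.
Variables (R : realType) (d : nat) (I : finType).
Variables (X : 'rV[R]_d -> Prop) (J : {set I}).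
Local Notation vec := 'rV[R]_d.
Hypothesis J_split : forall y : I -> vec, (forall i, i \in J -> X (y i)) ->
  exists a b (t : R), [/\ a \in J, b \in J, a != b, 0 < t < 1 &
                          X ((1 - t) *: y a + t *: y b)].

Lemma X_on_update (y : I -> vec) b z :
  (forall i, i \in J -> X (y i)) -> X z -> forall i, i \in J -> X ([eta y with b |-> z] i).
Proof. by move=> Xy Xz i iJ /=; case: eqP => // _; apply: Xy. Qed.

Lemma hull_update_cover (y : I -> vec) (L : seq vec) a b t :
  a \in J -> b \in J -> a != b -> 0 < t <= 1 -> ~ hull (J :\ a) y (y a) ->
  (forall w, X w -> hull J y w -> w \in L) ->
  forall w, X w -> hull J [eta y with a |-> (1 - t) *: y a + t *: y b] w -> w \in rem (y a) L.
Proof.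
move=> aJ bJ ab /andP[t_gt0 t_le1] ha coverL w Xw hw; apply: rem_mem.
  apply/eqP => wa; apply: ha; rewrite wa in hw.
  by apply: (hull_update_strict _ t_gt0 hw); rewrite in_setD1 eq_sym ab.
apply: coverL Xw (hull_update _ hw) => _.
by apply: hull_segment; rewrite ?t_le1 ?ltW.
Qed.

(* Induction on the number of points of X in the hull.  Unless [y a] or [y b]
   already lies in the hull of the other points, replacing it by the point z
   of X between them removes it from the hull.  Induction then gives core
   points u, u' of y[a := z] and y[b := z], and a third application to
   y[a := u', b := u] gives a core point of y. *)
Lemma hoffman_rec N (y : I -> vec) (L : seq vec) : (size L <= N)%N ->
  (forall i, i \in J -> X (y i)) -> (forall w, X w -> hull J y w -> w \in L) ->
  exists2 z, X z & hull_core J y z.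
Proof.
elim: N y L => [|N IH] y L sizeL Xy coverL.
  have [a [_ [_ [aJ _ _ _ _]]]] := J_split Xy.
  by case: L sizeL coverL => // _ /(_ _ (Xy a aJ) (hull_vertex aJ)).
have [a [b [t [aJ bJ ab /andP[t_gt0 t_lt1] Xz]]]] := J_split Xy.
set z := _ + _ in Xz.
have [ha | ha] := pselect (hull (J :\ a) y (y a)).
  by exists (y a); [apply: Xy | apply: hull_core_vertex].
have [hb | hb] := pselect (hull (J :\ b) y (y b)).
  by exists (y b); [apply: Xy | apply: hull_core_vertex].
have size_rem_vertex i : i \in J -> (size (rem (y i) L) <= N)%N.
  by move=> iJ; rewrite size_rem ?(coverL _ (Xy i iJ) (hull_vertex iJ)) // -subn1 leq_subLR.
have t01 : 0 < t <= 1 by apply/andP; split; lra.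
have t'01 : 0 < 1 - t <= 1 by apply/andP; split; lra.
have ba : b != a by rewrite eq_sym.
have coverL1 := hull_update_cover aJ bJ ab t01 ha coverL.
have ez : (1 - (1 - t)) *: y b + (1 - t) *: y a = z by rewrite addrC subKr.
have := hull_update_cover bJ aJ ba t'01 hb coverL; rewrite ez => coverL2.
have z_ab : hull [set a; b] y z.
  by apply: (hull_segment (set21 a b) (set22 a b)); rewrite !ltW.
have [u Xu core_a] := IH _ _ (size_rem_vertex a aJ) (X_on_update a Xy Xz) coverL1.
have [u' Xu' core_b] := IH _ _ (size_rem_vertex b bJ) (X_on_update b Xy Xz) coverL2.
have [v Xv core_v] := IH [eta y with a |-> u', b |-> u] _ (size_rem_vertex a aJ)
  (X_on_update a (X_on_update b Xy Xu) Xu')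
  (fun w Xw hw => coverL1 w Xw (hull_merge_sub aJ bJ core_a core_b hw)).
by exists v => //; apply: (hull_core_merge aJ bJ z_ab core_a core_b core_v).
Qed.

Lemma hoffman (y : I -> vec) : locally_finite X ->
  (forall i, i \in J -> X (y i)) -> exists2 z, X z & hull_core J y z.
Proof.
move=> finX Xy; have [L coverL] := locally_finite_hull J y finX.
exact: hoffman_rec (leqnn _) Xy coverL.
Qed.

End Hoffman.

Lemma helly_prop_of_segment (R : realType) (d : nat) (X : 'rV[R]_d -> Prop) (k : nat) :
  segment_property X k -> locally_finite X -> helly_prop X k.
Proof.
move=> splitX finX I C convC small.
suff meets n (J : {set I}) : (#|J| <= n)%N -> exists x, X x /\ forall i, i \in J -> C i x.
  by have [x [Xx Cx]] := meets _ [set: I] (leqnn _); exists x; split=> // i; apply: Cx.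
elim: n J => [|n IH] J cardJ; first by apply: small; rewrite (leq_trans cardJ).
have [|kJ] := leqP #|J| k; first exact: small.
have /choice[y hy] : forall i, exists x : 'rV[R]_d,
    i \in J -> X x /\ forall j, j \in J :\ i -> C j x.
  move=> i; case: (boolP (i \in J)) => iJ; last by exists 0.
  have [|x Cx] := IH (J :\ i); first by move: cardJ; rewrite (cardsD1 i J) iJ.
  by exists x.
have [z Xz core_z] := hoffman (splitX I J ^~ kJ) finX (fun i iJ => (hy i iJ).1).
exists z; split=> // i iJ; apply: (core_z i iJ _ (convC i)) => j /setD1P[ji jJ].
by apply: (hy j jJ).2; rewrite in_setD1 eq_sym ji.
Qed.

Lemma locally_finite_int (R : realType) (d : nat) :
  locally_finite (fun w : 'rV[R]_d => forall c, exists m : int, w ord0 c = m%:~R).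
Proof.
move=> M; pose B := Num.Def.archi_bound `|M|.
have MB : `|M| < B%:R := archi_boundP (normr_ge0 M).
pose row_of (g : {ffun 'I_d -> 'I_(B.*2).+1}) : 'rV[R]_d := \row_c ((g c)%:Z - B%:Z)%:~R.
exists (codom row_of) => w /fin_all_exists[m wm] wM.
have mB c : (`|m c| < B%:Z)%R.
  by rewrite -(ltr_int R) intr_norm -wm (le_lt_trans (wM c)) // (le_lt_trans (ler_norm M)).
have -> : w = row_of [ffun c => inord (absz (m c + B%:Z))].
  apply/rowP => c; rewrite mxE ffunE inordK; last by have := mB c; rewrite -addnn; lia.
  by rewrite wm; congr intmul; have := mB c; lia.
exact: codom_f.
Qed.

Lemma pigeonhole (I T : finType) (J : {set I}) (A : {pred T}) (f : I -> T) :
  (#|A| < #|J|)%N -> (forall i, i \in J -> f i \in A) ->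
  exists a b, [/\ a \in J, b \in J, a != b & f a = f b].
Proof.
move=> AJ fA; have /dinjectivePn[a aJ [b /andP[ba bJ] fab]] : ~~ dinjectiveb f J.
  apply: contraTN AJ => /dinjectiveP/card_in_imset <-; rewrite -leqNgt.
  by apply: subset_leq_card; apply/subsetP => _ /imsetP[i iJ ->]; apply: fA.
by exists a, b; rewrite eq_sym.
Qed.

Section Residues.
Variables (p : nat) (S : {set 'I_p.+1}).
Hypotheses (p_prime : prime p) (S_pos : forall s, s \in S -> (0 < s)%N).

Definition residues : {set 'F_p} := [set (nat_of_ord s)%:R | s in S].

Lemma card_residues : #|residues| = #|S|.
Proof.
rewrite card_in_imset // => s1 s2 /S_pos s1_gt0 /S_pos s2_gt0.
have := ltn_ord s1; have := ltn_ord s2.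
(* shift to 0..p-1, where reduction mod p is the identity *)
rewrite -(prednK s1_gt0) -(prednK s2_gt0) !mulrSr => s2_le s1_le /addIr /(congr1 val).
by rewrite /= !val_Fp_nat // !modn_small // => e; apply: val_inj => /=; lia.
Qed.

Lemma card_bad_multipliers (s v : 'F_p) : s \in residues ->
  (#|[set j | (s + j * v)%R \notin residues]| <= p - #|S|)%N.
Proof.
move=> sS; have [-> | v0] := eqVneq v 0.
  by rewrite (_ : [set j | _] = set0) ?cards0 //; apply/setP => j; rewrite !inE mulr0 addr0 sS.
have -> : [set j | s + j * v \notin residues] = (fun j => s + j * v) @^-1: ~: residues.
  by apply/setP => j; rewrite !inE.
rewrite card_preimset; last by move=> j1 j2 /addrI /(mulIf v0).
by have := cardsC residues; rewrite card_Fp // card_residues => /(canRL (addKn _)) ->.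
Qed.

Lemma exists_good_multiplier (d : nat) (s v : 'I_d -> 'F_p) : ((d * (p - #|S|)).+1 < p)%N ->
  (forall c, s c \in residues) -> exists2 j : 'F_p, j != 0 & forall c, s c + j * v c \in residues.
Proof.
move=> small sS; pose bad := 0 |: \bigcup_c [set j | s c + j * v c \notin residues].
have bad_small : (#|bad| < #|[set: 'F_p]|)%N.
  apply: (@leq_ltn_trans (d * (p - #|S|)).+1); last by rewrite cardsT card_Fp.
  rewrite /bad cardsU1; apply: (leq_add (leq_b1 _)).
  apply: leq_trans (unstable.card_big_setU _ _ _) _.
  apply: (@leq_trans (\sum_(c < d) (p - #|S|))).
    by apply: leq_sum => c _; apply: card_bad_multipliers.
  by rewrite sum_nat_const card_ord.
have /subsetPn[j _] : ~~ ([set: 'F_p] \subset bad).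
  by apply: contraTN bad_small => /subset_leq_card; rewrite leqNgt.
rewrite !inE negb_or => /andP[j0 /bigcupP good].
by exists j => // c; apply/negPn/negP => bad_c; apply: good; exists c; rewrite ?inE.
Qed.

Variables (R : realType) (d : nat).
Local Notation A := (@periodic_set R p (fun s : nat => exists2 t : 'I_p.+1, t \in S & s = t)).

Lemma periodic_setP (x : R) :
  A x <-> exists2 m : int, x = m%:~R & (m%:~R : 'F_p) \in residues.
Proof.
split=> [[_ [n [[s sS ->] ->]]] | [m -> /imsetP[s sS m_s]]].
  exists (s%:Z + p%:Z * n) => //; apply/imsetP; exists s => //.
  by rewrite intrD intrM -!pmulrn pchar_Fp_0 // mul0r addr0.
have /dvdzP[q m_sE] : (p %| m - s%:Z)%Z by rewrite (dvdz_pcharf (pchar_Fp p_prime)) intrB m_s subrr.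
exists s, q; split; first by exists s.
by rewrite mulrC -m_sE addrC subrK.
Qed.

Lemma periodic_between (ma mb : 'I_d -> int) : ((d * (p - #|S|)).+1 < p)%N ->
  (forall c, ((ma c)%:~R : 'F_p) \in residues) -> (forall c, (ma c)%:~R = (mb c)%:~R :> 'F_p) ->
  exists2 t : R, 0 < t < 1 &
    @cart_pow R d A ((1 - t) *: \row_c (ma c)%:~R + t *: \row_c (mb c)%:~R).
Proof.
move=> small maS mab; pose q c := ((mb c - ma c) %/ p)%Z.
have mbE c : mb c = ma c + q c * p%:Z.
  rewrite divzK; first by rewrite addrC subrK.
  by rewrite (dvdz_pcharf (pchar_Fp p_prime)) intrB mab subrr.
have [j j0 good] := exists_good_multiplier (fun c => (q c)%:~R) small maS.
have j_gt0 : (0 < j)%N by rewrite lt0n; apply: contra j0 => /eqP j0; apply/eqP/val_inj.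
have j_lt : (j < p)%N by rewrite -[X in (_ < X)%N](Fp_cast p_prime).
have p_gt0 : (0 : R) < p%:R by rewrite ltr0n prime_gt0.
exists (j%:R / p%:R).
  apply/andP; split; first by rewrite divr_gt0 // ltr0n.
  by rewrite ltr_pdivrMr // mul1r ltr_nat.
move=> c; apply/periodic_setP; exists (ma c + j%:Z * q c).
  rewrite !mxE mbE !intrD !intrM -!pmulrn.
  by field; rewrite gt_eqF.
by rewrite intrD intrM -pmulrn natr_Zp; apply: good.
Qed.

Lemma segment_property_periodic : ((d * (p - #|S|)).+1 < p)%N ->
  segment_property (@cart_pow R d A) (#|S| ^ d).
Proof.
move=> small I J y cardJ AJ.
have /choice[m hm] : forall i, exists m : 'I_d -> int, i \in J ->
    y i = \row_c (m c)%:~R /\ forall c, ((m c)%:~R : 'F_p) \in residues.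
  move=> i; case: (boolP (i \in J)) => iJ; last by exists (fun=> 0).
  have /fin_all_exists2[mi yi_mi miS] : forall c, exists2 mc : int,
      y i ord0 c = mc%:~R & (mc%:~R : 'F_p) \in residues.
    by move=> c; apply/periodic_setP; apply: AJ.
  by exists mi => _; split=> //; apply/rowP => c; rewrite mxE.
pose res i := [ffun c => ((m i c)%:~R : 'F_p)].
have [a [b [aJ bJ ab res_ab]]] : exists a b, [/\ a \in J, b \in J, a != b & res a = res b].
  apply: (@pigeonhole _ _ J (ffun_on residues)).
    by rewrite card_ffun_on card_residues card_ord.
  by move=> i iJ; apply/ffun_onP => c; rewrite ffunE; apply: (hm i iJ).2.
have res_abE c : (m a c)%:~R = (m b c)%:~R :> 'F_p.
  by move/ffunP/(_ c): res_ab; rewrite !ffunE.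
have [t t01 Aab] := periodic_between small (hm a aJ).2 res_abE.
by exists a, b, t; rewrite (hm a aJ).1 (hm b bJ).1.
Qed.

Lemma locally_finite_periodic : locally_finite (@cart_pow R d A).
Proof.
move=> M; have [L intL] := locally_finite_int d M.
by exists L => w Aw; apply: intL => c; have [s [n [_ ->]]] := Aw c; eexists.
Qed.

End Residues.

Lemma deficiency_small (R : realType) (p d n : nat) (alpha : R) : (0 < d)%N -> (1 < p)%N ->
  1 - d%:R^-1 * (1 - p%:R^-1) < alpha -> alpha * p%:R <= n%:R -> ((d * (p - n)).+1 < p)%N.
Proof.
move=> d_gt0 p_gt1 alpha_gt alpha_le.
have d_gt0' : (0 : R) < d%:R by rewrite ltr0n.
have p_gt0' : (0 : R) < p%:R by rewrite ltr0n (ltn_trans _ p_gt1).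
have : (d * p + 1 < d * n + p)%N.
  rewrite -(ltr_nat R) !natrD !natrM.
  have e : d%:R * p%:R * (1 - d%:R^-1 * (1 - p%:R^-1)) = d%:R * p%:R - p%:R + 1 :> R.
    by field; rewrite !gt_eqF.
  rewrite -(ltr_pM2l (mulr_gt0 d_gt0' p_gt0')) e in alpha_gt.
  rewrite -(ler_pM2l d_gt0') in alpha_le.
  lra.
rewrite mulnBr; nia.
Qed.

Theorem corollary4 (R : realType) (p d : nat) (alpha : R)
  (S : {set 'I_p.+1}) :
  prime p -> (0 < d)%N ->
  alpha > 1 - d%:R^-1 * (1 - p%:R^-1) ->
  (forall s : 'I_p.+1, s \in S -> (0 < s)%N) ->
  #|S|%:R >= alpha * p%:R ->
  helly_number_le
    (@cart_pow R d (@periodic_set R p (fun s : nat => exists2 t : 'I_p.+1, t \in S & s = t)))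
    (#|S| ^ d).
Proof.
move=> p_prime d_gt0 alpha_gt S_pos alpha_le.
have small := deficiency_small d_gt0 (prime_gt1 p_prime) alpha_gt alpha_le.
exists (#|S| ^ d)%N; split=> //; apply: helly_prop_of_segment.
  exact: segment_property_periodic.
exact: locally_finite_periodic.
Qed.
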